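(* For every $\varepsilon,\delta\in(0,1)$ and $n,r\in\mathbb{N}$, define \[ \varepsilon_0=\frac{\varepsilon}{\sqrt{8r\log(2/\delta)}},\qquad\delta_0=\frac{\delta}{2r},\qquad\lambda^*=\lambda^*(n,\varepsilon_0,\delta_0). \] Then for every $\lambda\ge\lambda^*$, the real-sum protocol $P^{\mathbb{R}}_{n,\lambda,r}$ is $(\varepsilon,\delta)$-differentially private in the shuffled model.
   Context: Differential privacy: an algorithm $M$ on datasets is $(\varepsilon,\delta)$-differentially private if for all datasets $X,X'$ differing in one user's entry and every output set $T$, $\Pr[M(X)\in T]\le e^\varepsilon\Pr[M(X')\in T]+\delta$; a shuffled protocol is $(\varepsilon,\delta)$-differentially private if the map from users' data to the uniformly randomly permuted multiset of all messages is. Bit randomizer $R^{0/1}_{n,\lambda}(b)$, $b\in\{0,1\}$: draw $\mathbf{b}\sim\mathrm{Ber}(\lambda/n)$; output $b$ if $\mathbf{b}=0$, a fresh $\mathrm{Ber}(1/2)$ bit if $\mathbf{b}=1$. The bit-sum protocol with $n$ users has each user send $R^{0/1}_{n,\lambda}(x_i)$ for $x_i\in\{0,1\}$. $\lambda^*(n,\varepsilon,\delta)$ is the minimum value of $\lambda$ such that the bit-sum protocol with $n$ users is $(\varepsilon,\delta)$-differentially private in the shuffled model. Encoder $E_r(x)$, $x\in[0,1]$: $\mu=\lceil xr\rceil$, $p=xr-\mu+1$, and $b_j=1$ for $j<\mu$, $b_j\sim\mathrm{Ber}(p)$ for $j=\mu$, $b_j=0$ for $j>\mu$ ($j=1,\dots,r$).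 Real-sum protocol $P^{\mathbb{R}}_{n,\lambda,r}$: user $i$ computes $(b_{i,1},\dots,b_{i,r})=E_r(x_i)$ and sends the $r$ messages $R^{0/1}_{n,\lambda}(b_{i,j})$ (independent randomness); all $nr$ messages are shuffled; the analyzer outputs $\frac1r\cdot\frac{n}{n-\lambda}(\sum_{i,j}y_{i,j}-\frac{\lambda r}{2})$. $\log$ is the natural logarithm. *)

From mathcomp Require Import all_boot all_order all_algebra.
From mathcomp Require Import reals.
From mathcomp.analysis Require Import sequences exp.
Unset Printing Implicit Defensive.
Import Order.TTheory GRing.Theory Num.Theory.
Local Open Scope ring_scope.

Section Defs.
Context {R : realType}.

(* Output of the shuffler on bit messages: the multiset of all messages,
   represented by its multiplicity function  m |-> #{messages equal to m}. *)
Definition mset_out := {ffun bool -> nat}.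

(* Pr[ R^{0/1}_{n,lambda}(b) = y ]: with prob. lambda/n a fresh Ber(1/2) bit,
   otherwise b itself. *)
Definition randP (n : nat) (lam : R) (b y : bool) : R :=
  (1 - lam / n%:R) * (b == y)%:R + (lam / n%:R) / 2.

Definition bitsum_view {n : nat} (y : {ffun 'I_n -> bool}) : mset_out :=
  [ffun m => #|[set i : 'I_n | y i == m]|].

Definition bitsum_prob (n : nat) (lam : R) (X : 'I_n -> bool)
  (T : pred mset_out) : R :=
  \sum_(y : {ffun 'I_n -> bool} | T (bitsum_view y))
     \prod_(i < n) randP n lam (X i) (y i).

Definition dp_private {D : Type} {n : nat} (dom : D -> Prop)
  (M : ('I_n -> D) -> pred mset_out -> R) (eps delta : R) : Prop :=
  forall X X' : 'I_n -> D,
    (forall i, dom (X i)) -> (forall i, dom (X' i)) ->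
    (exists k : 'I_n, forall i, i != k -> X i = X' i) ->
    forall T : pred mset_out, M X T <= expR eps * M X' T + delta.

Definition bitsum_private (n : nat) (lam eps delta : R) : Prop :=
  dp_private (fun _ : bool => True) (fun X => bitsum_prob n lam X) eps delta.

(* ls is lambda^*(n,eps,delta): the minimum lambda (over the admissible range
   0 <= lambda <= n, where Ber(lambda/n) makes sense) for which the bit-sum
   protocol is (eps,delta)-DP in the shuffled model. *)
Definition is_lambda_star (n : nat) (eps delta ls : R) : Prop :=
  [/\ 0 <= ls <= n%:R, bitsum_private n ls eps delta &
      forall lam, 0 <= lam <= n%:R -> bitsum_private n lam eps delta -> ls <= lam].

(* Pr[ E_r(x) = b ], coordinates j = 1..r are indexed by j-1 : 'I_r *)
Definition encP (r : nat) (x : R) (b : {ffun 'I_r -> bool}) : R :=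
  let mu : int := Num.ceil (x * r%:R) in
  let p : R := x * r%:R - mu%:~R + 1 in
  \prod_(j < r)
    (let jj : int := (j.+1)%:Z in
     let q1 : R := if jj < mu then 1 else if jj == mu then p else 0 in
     if b j then q1 else 1 - q1).

Definition realsum_view {n r : nat} (y : {ffun 'I_n -> {ffun 'I_r -> bool}})
  : mset_out :=
  [ffun m => #|[set p : 'I_n * 'I_r | y p.1 p.2 == m]|].

Definition userP (n r : nat) (lam x : R) (yi : {ffun 'I_r -> bool}) : R :=
  \sum_(b : {ffun 'I_r -> bool}) encP r x b * \prod_(j < r) randP n lam (b j) (yi j).

Definition realsum_prob (n r : nat) (lam : R) (X : 'I_n -> R)
  (T : pred mset_out) : R :=
  \sum_(y : {ffun 'I_n -> {ffun 'I_r -> bool}} | T (realsum_view y))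
     \prod_(i < n) userP n r lam (X i) (y i).

Definition realsum_private (n r : nat) (lam eps delta : R) : Prop :=
  dp_private (fun x : R => 0 <= x <= 1) (fun X => realsum_prob n r lam X) eps delta.

End Defs.

(* Fix the encodings of two neighbouring inputs; they differ in one row, and the
   encoder's randomness is mixed in at the end, as is the extra noise turning
   [lambda^*] into [lambda >= lambda^*].  The shuffled output only depends on the
   numbers of ones in the [r] columns, which are independent outputs of bit-sum
   protocols on neighbouring inputs, hence [(eps0, delta0)]-indistinguishable.
   Each such pair of laws contains sub-probabilities of mass [>= 1 - delta0] whose
   ratio lies in [[e^-eps0, e^eps0]].  On the product of these cores, a Markov bound
   on the [s]-th moment of the likelihood ratio leaves an error [e^(-s eps) M^r],
   and convexity gives [M <= cosh ((s + 1/2) eps0) <= exp (((s + 1/2) eps0)^2)].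
   Taking [s ~ 4 log (2/delta) / eps] makes [r delta0 + e^(-s eps) M^r <= delta]. *)

From mathcomp Require Import all_boot all_order all_algebra.
From mathcomp Require Import reals.
From mathcomp.analysis Require Import sequences exp.
From mathcomp Require Import ring lra.
From mathcomp Require boolp.
Import Order.TTheory GRing.Theory Num.Theory.
Local Open Scope ring_scope.

Section ExpBounds.
Context {R : realType}.
Implicit Types (u y : R).

Definition coshR y : R := (expR y + expR (- y)) / 2.

Lemma expR_le_inv1B u : u < 1 -> expR u <= (1 - u)^-1.
Proof.
move=> u_lt1; rewrite -[_^-1]mul1r ler_pdivlMr; last lra.
have := expR_ge1Dx (- u); have := expRxMexpNx_1 u; have := expR_gt0 u; nra.
Qed.

Lemma coshR_ge1 y : 1 <= coshR y.
Proof. by rewrite /coshR; have := expR_ge1Dx y; have := expR_ge1Dx (- y); lra. Qed.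

Lemma coshR_double y : coshR (2 * y) = 2 * coshR y ^+ 2 - 1.
Proof.
rewrite /coshR -mulrN !expRM_natl; have := expRxMexpNx_1 y.
set a := expR y; set b := expR (- y) => ab1.
have -> : (a ^+ 2 + b ^+ 2) / 2 = 2 * ((a + b) / 2) ^+ 2 - a * b by field.
by rewrite ab1.
Qed.

(* Halving: [expR (-+ 2u) <= (1 -+ u)^-2], and the resulting rational bound
   is at most [1 + 4 u^2] as long as [u^2 <= 1/16]. *)
Lemma coshR_le_expR_sqr_small y : -(1/2) <= y <= 1/2 -> coshR y <= expR (y ^+ 2).
Proof.
move=> /andP[y_ge y_le]; set u := y / 2.
have [u_ge u_le] : -(1/4) <= u /\ u <= 1/4 by rewrite /u; split; lra.
have -> : y = 2 * u by rewrite /u; field.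
have sqr_expR_le (v : R) : -(1/4) <= v -> v <= 1/4 -> expR (2 * v) <= ((1 - v) ^+ 2)^-1.
  move=> v_ge v_le; have le_inv : expR v <= (1 - v)^-1 by apply: expR_le_inv1B; lra.
  rewrite expRM_natl -exprVn.
  by apply: lerXn2r; rewrite ?nnegrE ?expR_ge0 ?invr_ge0 //; lra.
have := sqr_expR_le u u_ge u_le; have := sqr_expR_le (- u) ltac:(lra) ltac:(lra).
rewrite mulrN opprK /coshR => Nle le; apply: le_trans (expR_ge1Dx _).
suff : ((1 - u) ^+ 2)^-1 + ((1 + u) ^+ 2)^-1 <= 2 * (1 + (2 * u) ^+ 2) by lra.
have p1 : 0 < (1 - u) ^+ 2 by rewrite exprn_gt0 //; lra.
have p2 : 0 < (1 + u) ^+ 2 by rewrite exprn_gt0 //; lra.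
rewrite -subr_ge0.
have -> : 2 * (1 + (2 * u) ^+ 2) - (((1 - u) ^+ 2)^-1 + ((1 + u) ^+ 2)^-1)
   = 2 * u ^+ 2 * (1 - 7 * u ^+ 2 + 4 * u ^+ 4) / ((1 - u) ^+ 2 * (1 + u) ^+ 2).
  by field; apply/andP; split; apply/eqP; lra.
have u4 : 0 <= u ^+ 4 by rewrite exprn_even_ge0.
by apply: divr_ge0; [apply: mulr_ge0; nra | apply: mulr_ge0; apply: ltW].
Qed.

Lemma coshR_double_le_expR_sqr y : coshR y <= expR (y ^+ 2) ->
  coshR (2 * y) <= expR ((2 * y) ^+ 2).
Proof.
move=> cosh_le; rewrite coshR_double.
have -> : (2 * y) ^+ 2 = 4 * y ^+ 2 by ring.
rewrite expRM_natl; have := coshR_ge1 y.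
have : 1 <= expR (y ^+ 2) by rewrite -expR0 ler_expR sqr_ge0.
move: cosh_le; set c := coshR y; set w := expR (y ^+ 2) => c_le w_ge1 c_ge1.
have : 0 <= (w ^+ 2 - 1) ^+ 2 by apply: sqr_ge0.
have : c ^+ 2 <= w ^+ 2 by apply: lerXn2r; rewrite ?nnegrE; lra.
have -> : w ^+ 4 = (w ^+ 2) ^+ 2 by rewrite -exprM.
nra.
Qed.

Lemma coshR_le_expR_sqr y : coshR y <= expR (y ^+ 2).
Proof.
suff coshR_le N : forall y, -(2 ^+ N / 2) <= y <= 2 ^+ N / 2 -> coshR y <= expR (y ^+ 2).
  set N := (Num.truncn (2 * `|y|)).+1.
  apply: (coshR_le N).
  have N_gt : 2 * `|y| < N%:R by apply: truncnS_gt.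
  have N_le : N%:R <= 2 ^+ N :> R by rewrite -natrX ler_nat ltnW // ltn_expl.
  by have := ler_norm y; have := ler_norm (- y); rewrite normrN; lra.
elim: N => [|N IHN] {}y y_bound.
  by apply: coshR_le_expR_sqr_small; rewrite expr0 in y_bound.
have -> : y = 2 * (y / 2) by field.
by apply/coshR_double_le_expR_sqr/IHN; rewrite exprS in y_bound; lra.
Qed.

End ExpBounds.

Section LossMoment.
Context {R : realType}.
Implicit Types (a : R).

(* [\sum_x A x ^+ s.+1 / B x ^+ s] for the extremal pair [A = (e^a, 1) / (1 + e^a)],
   [B = (1, e^a) / (1 + e^a)] of [e^a]-indistinguishable distributions. *)
Definition loss_moment a (s : nat) : R := (expR a ^+ s.+1 + expR (- a) ^+ s) / (1 + expR a).

Lemma loss_moment_ge0 a s : 0 <= loss_moment a s.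
Proof.
by apply: divr_ge0; [apply: addr_ge0 | apply: addr_ge0 => //];
  rewrite ?exprn_ge0 ?expR_ge0.
Qed.

Lemma loss_moment_coshR a s :
  loss_moment a s = coshR ((s%:R + 1/2) * a) / coshR (a / 2).
Proof.
set y := (s%:R + 1/2) * a; rewrite /loss_moment /coshR.
have e1 : expR a ^+ s.+1 = expR (a / 2) * expR y.
  by rewrite -expRM_natl -expRD /y -natr1; congr expR; field.
have e2 : expR (- a) ^+ s = expR (a / 2) * expR (- y).
  by rewrite -expRM_natl -expRD /y; congr expR; field.
have e3 : 1 + expR a = expR (a / 2) * (expR (a / 2) + expR (- (a / 2))).
  by rewrite mulrDr expRxMexpNx_1 -expRD [RHS]addrC; congr (_ + expR _); field.
have := expR_gt0 (a / 2); have := expR_gt0 (- (a / 2)).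
rewrite e1 e2 e3 => p1 p2; field.
by apply/andP; split; rewrite gt_eqF //; lra.
Qed.

Lemma loss_moment_le a s : loss_moment a s <= expR (((s%:R + 1/2) * a) ^+ 2).
Proof.
rewrite loss_moment_coshR ler_pdivrMr; last by have := coshR_ge1 (a / 2); lra.
apply: le_trans (coshR_le_expR_sqr _) _.
by rewrite ler_peMr ?coshR_ge1 ?expR_ge0.
Qed.

End LossMoment.

Section CompositionBudget.
Context {R : realType}.
Implicit Types (eps delta : R).

Lemma ln2_ge : 3/5 <= ln (2 : R).
Proof.
have e15 : expR (1/5 : R) <= 5/4.
  rewrite (_ : 5/4 = (1 - 1/5)^-1); last by field.
  by apply: expR_le_inv1B; lra.
rewrite -ler_expR lnK ?posrE // (_ : 3/5 = 3%:R * (1/5)); last by field.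
rewrite expRM_natl; apply: le_trans (_ : (5/4) ^+ 3 <= _); last by rewrite !exprS expr0; lra.
by apply: lerXn2r; rewrite ?nnegrE ?expR_ge0 //; lra.
Qed.

Lemma truncn_mul_bracket (x eps : R) : 0 <= x -> 0 < eps ->
  x - eps < (Num.truncn (x / eps))%:R * eps <= x.
Proof.
move=> x_ge0 eps_gt0; have xe_ge0 : 0 <= x / eps by apply: divr_ge0 => //; apply: ltW.
have le_x : (Num.truncn (x / eps))%:R * eps <= x by rewrite -ler_pdivlMr // truncn_le.
have gt_x : x < ((Num.truncn (x / eps))%:R + 1) * eps.
  by rewrite -ltr_pdivrMr // natr1 truncnS_gt.
by apply/andP; split; lra.
Qed.

Lemma composition_budget {eps delta} {r s : nat} :
  0 < eps < 1 -> 0 < delta < 1 -> (0 < r)%N ->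
  4 * ln (2 / delta) - eps < s%:R * eps <= 4 * ln (2 / delta) ->
  r%:R * (delta / (2 * r%:R)) + expR (- (s%:R * eps)) *
    expR (((s%:R + 1/2) * (eps / Num.sqrt (8 * r%:R * ln (2 / delta)))) ^+ 2) ^+ r
  <= delta.
Proof.
move=> /andP[eps_gt0 eps_lt1] /andP[delta_gt0 delta_lt1] r_gt0.
set L := ln (2 / delta); set x := s%:R * eps => /andP[x_gt x_le].
have L_ge : 3/5 <= L.
  apply: le_trans ln2_ge _; rewrite ler_ln ?posrE ?divr_gt0 //.
  by rewrite ler_pdivlMr //; lra.
have r_pos : (0 : R) < r%:R by rewrite ltr0n.
have sqrt_sqr : Num.sqrt (8 * r%:R * L) ^+ 2 = 8 * r%:R * L by rewrite sqr_sqrtr //; nra.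
have sqrt_gt0 : 0 < Num.sqrt (8 * r%:R * L) by rewrite sqrtr_gt0; nra.
have -> : r%:R * (delta / (2 * r%:R)) = delta / 2 by field; lra.
rewrite -expRM_natr -expRD.
have -> : ((s%:R + 1/2) * (eps / Num.sqrt (8 * r%:R * L))) ^+ 2 * r%:R
    = (x + eps / 2) ^+ 2 / (8 * L).
  by rewrite exprMn expr_div_n sqrt_sqr /x; field; apply/andP; split; lra.
(* With [d := 4 L - x] in [[0, eps)], the exponent is at most [-L] because
   [(eps/2 - d)^2 + 4 L eps <= 8 L^2], using [eps < 1] and [L >= 3/5]. *)
have exponent_le : - x + (x + eps / 2) ^+ 2 / (8 * L) <= - L.
  suff : (x + eps / 2) ^+ 2 / (8 * L) <= x - L by lra.
  rewrite ler_pdivrMr; last lra.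
  set d := 4 * L - x; have -> : x = 4 * L - d by rewrite /d; ring.
  have : (eps / 2 - d) ^+ 2 <= eps ^+ 2 / 4 by rewrite /d; nra.
  nra.
suff : expR (- x + (x + eps / 2) ^+ 2 / (8 * L)) <= delta / 2 by lra.
apply: le_trans (_ : expR (- L) <= _); first by rewrite ler_expR.
by rewrite expRN /L lnK ?posrE ?divr_gt0 // invf_div; lra.
Qed.

End CompositionBudget.

Section PowerChord.
Context {R : realFieldType}.

Lemma subrXX_bounds (u v : R) (n : nat) : 0 <= u <= v ->
  (v - u) * (n%:R * u ^+ n.-1) <= v ^+ n - u ^+ n <= (v - u) * (n%:R * v ^+ n.-1).
Proof.
move=> /andP[u_ge0 u_le_v]; rewrite subrXX.
have term_bounds (i : 'I_n) : u ^+ n.-1 <= v ^+ (n.-1 - i) * u ^+ i <= v ^+ n.-1.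
  have i_le : (i <= n.-1)%N by case: i => i /=; case: n.
  have split_pow (w : R) : w ^+ n.-1 = w ^+ (n.-1 - i) * w ^+ i by rewrite -exprD subnK.
  rewrite !split_pow; apply/andP; split; [apply: ler_wpM2r | apply: ler_wpM2l];
    by rewrite ?exprn_ge0 //; first [lra | apply: lerXn2r; rewrite ?nnegrE //; lra].
have sum_const (c : R) : \sum_(i < n) c = n%:R * c by rewrite sumr_const card_ord mulr_natl.
have vu_ge0 : 0 <= v - u by lra.
by apply/andP; split; apply: ler_wpM2l => //; rewrite -sum_const;
  apply: ler_sum => i _; case/andP: (term_bounds i).
Qed.

Lemma expr_le_chord (al be z : R) (n : nat) : 0 < al < be -> al <= z <= be ->
  (be - al) * z ^+ n <= (be - z) * al ^+ n + (z - al) * be ^+ n.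
Proof.
move=> /andP[al_gt0 al_lt_be] /andP[al_le_z z_le_be].
have /andP[_ hi] := @subrXX_bounds al z n ltac:(apply/andP; split; lra).
have /andP[lo _] := @subrXX_bounds z be n ltac:(apply/andP; split; lra).
rewrite -subr_ge0.
have -> : (be - z) * al ^+ n + (z - al) * be ^+ n - (be - al) * z ^+ n
    = (z - al) * (be ^+ n - z ^+ n) - (be - z) * (z ^+ n - al ^+ n) by ring.
rewrite subr_ge0.
apply: le_trans (_ : (be - z) * ((z - al) * (n%:R * z ^+ n.-1)) <= _).
  by apply: ler_wpM2l; lra.
by rewrite mulrCA; apply: ler_wpM2l; lra.
Qed.

(* The chord of [z |-> z ^+ k.+1] over [[al, be]], evaluated at [z = A / B] and scaled by [B]. *)
Lemma ratio_expr_le_chord (al be A B : R) (k : nat) :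
  0 < al < be -> 0 <= B -> al * B <= A <= be * B ->
  A ^+ k.+1 / B ^+ k <=
  (be * al ^+ k.+1 * B - al * be ^+ k.+1 * B + (be ^+ k.+1 - al ^+ k.+1) * A) / (be - al).
Proof.
move=> al_be B_ge0 /andP[A_ge A_le]; have /andP[al_gt0 al_lt_be] := al_be.
have [B0|B_neq0] := eqVneq B 0.
  have -> : A = 0 by rewrite B0 !mulr0 in A_ge A_le; lra.
  by rewrite B0 !mulr0 !expr0n /= !mul0r subrr add0r mul0r.
have B_gt0 : 0 < B by rewrite lt_def B_neq0 B_ge0.
set z := A / B; have -> : A = z * B by rewrite /z mulfVK.
have z_in : al <= z <= be by rewrite /z ler_pdivlMr // ler_pdivrMr //; apply/andP.
have chord := @expr_le_chord al be z k.+1 al_be z_in.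
have -> : (z * B) ^+ k.+1 / B ^+ k = z ^+ k.+1 * B.
  by rewrite exprMn [B ^+ k.+1]exprSr mulrA mulrAC mulfK ?expf_neq0.
rewrite ler_pdivlMr; last lra.
have -> : be * al ^+ k.+1 * B - al * be ^+ k.+1 * B + (be ^+ k.+1 - al ^+ k.+1) * (z * B)
   = B * ((be - z) * al ^+ k.+1 + (z - al) * be ^+ k.+1) by ring.
have -> : z ^+ k.+1 * B * (be - al) = B * ((be - al) * z ^+ k.+1) by ring.
by apply: ler_wpM2l => //; apply: ltW.
Qed.

End PowerChord.

Definition indist {R : numDomainType} {K : finType} (c d : R) (p q : K -> R) :=
  forall S : pred K, \sum_(x | S x) p x <= c * \sum_(x | S x) q x + d.

Section IndistCore.
Context {R : realFieldType} {K : finType}.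
Implicit Types (p q : K -> R) (d : R).

Variable e : R.

Definition capped p q x := Num.min (e * q x) (p x).

Definition capped_mass p q := \sum_x capped p q x.

Lemma capped_bounds p q : 1 <= e -> (forall x, 0 <= p x) -> (forall x, 0 <= q x) ->
  forall x, [/\ 0 <= capped p q x, capped p q x <= p x & capped p q x <= e * capped q p x].
Proof.
move=> e_ge1 p_ge0 q_ge0 x; have := p_ge0 x; have := q_ge0 x.
rewrite /capped !minEle => qx_ge0 px_ge0.
have ep_ge : p x <= e * p x by rewrite ler_peMl.
have eq_ge : q x <= e * q x by rewrite ler_peMl.
have eep_ge : e * p x <= e * (e * p x) by apply: ler_peMl => //; apply: mulr_ge0 => //; lra.
by case: (leP (e * q x) (p x)); case: (leP (e * p x) (q x)); split; lra.
Qed.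

Lemma capped_mass_ge0 p q : 1 <= e -> (forall x, 0 <= p x) -> (forall x, 0 <= q x) ->
  0 <= capped_mass p q.
Proof.
by move=> e_ge1 p_ge0 q_ge0; apply: sumr_ge0 => x _; case: (capped_bounds p q e_ge1 p_ge0 q_ge0 x).
Qed.

Lemma capped_mass_ge p q d : \sum_x p x = 1 -> indist e d p q -> 1 - d <= capped_mass p q.
Proof.
move=> p_sum1 /(_ (fun x => e * q x <= p x)) p_le.
rewrite /capped_mass (bigID (fun x => e * q x <= p x)) /=.
rewrite (eq_bigr (fun x => e * q x)); last by move=> x hx; rewrite /capped minEle hx.
rewrite [X in _ <= _ + X](eq_bigr p); last by move=> x /negbTE hx; rewrite /capped minEle hx.
by move: p_sum1; rewrite -mulr_sumr (bigID (fun x => e * q x <= p x)) /=; lra.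
Qed.

(* The weight is chosen so that the mass of [shrunk p q] is [capped_mass q p]. *)
Definition shrink_weight p q :=
  (capped_mass p q - capped_mass q p) / (capped_mass p q - capped_mass q p / e).

Definition shrunk p q x :=
  (1 - shrink_weight p q) * capped p q x + shrink_weight p q * (capped q p x / e).

Lemma shrunk_props p q : 1 <= e -> (forall x, 0 <= p x) -> (forall x, 0 <= q x) ->
  capped_mass q p <= capped_mass p q ->
  [/\ forall x, 0 <= shrunk p q x <= p x,
      \sum_x shrunk p q x = capped_mass q p,
      forall x, shrunk p q x <= e * capped q p x &
      forall x, capped q p x <= e * shrunk p q x].
Proof.
move=> e_ge1 p_ge0 q_ge0; set a := capped_mass p q; set b := capped_mass q p => b_le_a.
have b_ge0 : 0 <= b by exact: capped_mass_ge0.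
have e_gt0 : 0 < e by lra.
have be_le : b / e <= b by rewrite ler_pdivrMr //; nra.
have [t_ge0 t_le1] : 0 <= shrink_weight p q /\ shrink_weight p q <= 1.
  rewrite /shrink_weight -/a -/b; have [->|ab_neq0] := eqVneq (a - b / e) 0.
    by rewrite invr0 mulr0; lra.
  have ab_gt0 : 0 < a - b / e by rewrite lt_def ab_neq0 /=; lra.
  by split; [apply: divr_ge0; lra | rewrite ler_pdivrMr //; lra].
have bounds x :=
  (capped_bounds p q e_ge1 p_ge0 q_ge0 x, capped_bounds q p e_ge1 q_ge0 p_ge0 x).
have qe_ge0 x : 0 <= capped q p x / e by case: (bounds x) => _ [? _ _]; apply: divr_ge0; lra.
have qe_eq x : capped q p x = e * (capped q p x / e) by rewrite mulrC divfK ?gt_eqF.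
split.
- move=> x; have [[a1 a2 a3] [b1 b2 b3]] := bounds x; have := qe_ge0 x.
  have : capped q p x / e <= p x by rewrite ler_pdivrMr // mulrC; nra.
  by rewrite /shrunk; move=> ? ?; apply/andP; split; nra.
- rewrite /shrunk /shrink_weight -/a -/b big_split /= -!mulr_sumr -mulr_suml.
  rewrite (_ : \sum_i capped p q i = a) // (_ : \sum_i capped q p i = b) //.
  have [ab0|ab_neq0] := eqVneq (a - b / e) 0; first by rewrite ab0 invr0 mulr0; lra.
  have -> : (1 - (a - b) / (a - b / e)) * a + (a - b) / (a - b / e) * (b / e)
     = a - (a - b) / (a - b / e) * (a - b / e) by ring.
  by rewrite mulfVK //; ring.
- move=> x; have [[a1 a2 a3] [b1 b2 b3]] := bounds x; have := qe_ge0 x.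
  have : capped q p x / e <= e * capped q p x by rewrite ler_pdivrMr //; nra.
  by rewrite /shrunk; move=> ? ?; nra.
- move=> x; have [[a1 a2 a3] [b1 b2 b3]] := bounds x; have := qe_eq x; have := qe_ge0 x.
  by rewrite /shrunk; move=> ? ?; nra.
Qed.

Lemma indist_core p q d : 1 <= e ->
  (forall x, 0 <= p x) -> (forall x, 0 <= q x) -> \sum_x p x = 1 -> \sum_x q x = 1 ->
  indist e d p q -> indist e d q p ->
  exists A B : K -> R,
    [/\ forall x, 0 <= A x <= p x, forall x, 0 <= B x <= q x,
        \sum_x A x = \sum_x B x, 1 - d <= \sum_x B x &
        forall x, A x <= e * B x /\ B x <= e * A x].
Proof.
move=> e_ge1.
wlog b_le_a : p q / capped_mass q p <= capped_mass p q => [sym|] p_ge0 q_ge0 p1 q1 pq qp.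
  have [|le_ab] := leP (capped_mass q p) (capped_mass p q); first by move/sym; apply.
  have [A [B [A_in B_in AB_eq B_ge AB_le]]] := sym q p (ltW le_ab) q_ge0 p_ge0 q1 p1 qp pq.
  exists B, A; split=> //; rewrite ?AB_eq //.
  by move=> x; have [] := AB_le x.
have [sh_in sh_sum sh_le le_sh] := shrunk_props p q e_ge1 p_ge0 q_ge0 b_le_a.
exists (shrunk p q), (capped q p); split => //.
- by move=> x; case: (capped_bounds q p e_ge1 q_ge0 p_ge0 x) => *; apply/andP.
- exact: capped_mass_ge.
Qed.

End IndistCore.

Section ProductBounds.
Context {R : realFieldType}.

Lemma ler_psum_predT (I : finType) (S : pred I) (f : I -> R) : (forall i, 0 <= f i) ->
  \sum_(i | S i) f i <= \sum_i f i.
Proof. by move=> f_ge0; rewrite big_mkcond /=; apply: ler_sum => i _; case: (S i). Qed.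

Lemma prod_ge_1_sub_sum (r : nat) (m : 'I_r -> R) : (forall j, 0 <= m j <= 1) ->
  1 - \sum_j (1 - m j) <= \prod_j m j.
Proof.
elim: r m => [|r IHr] m m_in; first by rewrite !big_ord0; lra.
rewrite !big_ord_recr /=.
have := IHr (fun j => m (widen_ord (leqnSn r) j)) (fun j => m_in _).
have : \prod_(j < r) m (widen_ord (leqnSn r) j) <= 1 by apply: prodr_ile1 => j _; apply: m_in.
have : 0 <= \prod_(j < r) m (widen_ord (leqnSn r) j).
  by apply: prodr_ge0 => j _; case/andP: (m_in (widen_ord (leqnSn r) j)).
have := m_in ord_max; set P := \prod_(j < r) _; set S := \sum_(j < r) _; set x := m ord_max.
by move=> /andP[? ?]; nra.
Qed.

(* Either [X <= c Y], or [X / (c Y) >= 1] and then its [s]-th power dominates. *)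
Lemma le_add_ratio_moment (X Y c : R) (s : nat) : 0 <= X -> 0 <= Y -> (Y = 0 -> X = 0) ->
  0 < c -> X <= c * Y + (c ^+ s)^-1 * (X ^+ s.+1 / Y ^+ s).
Proof.
move=> X_ge0 Y_ge0 Y0_X0 c_gt0; have cs_gt0 : 0 < c ^+ s by apply: exprn_gt0.
have [Y0|Y_neq0] := eqVneq Y 0; first by rewrite (Y0_X0 Y0) Y0 exprS !mul0r !mulr0 addr0.
have Y_gt0 : 0 < Y by rewrite lt_def Y_neq0.
have moment_ge0 : 0 <= (c ^+ s)^-1 * (X ^+ s.+1 / Y ^+ s).
  by rewrite mulr_ge0 ?invr_ge0 ?divr_ge0 ?exprn_ge0 // ltW.
have [|cY_lt] := lerP X (c * Y); first lra.
have -> : (c ^+ s)^-1 * (X ^+ s.+1 / Y ^+ s) = X * (X / (c * Y)) ^+ s.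
  by rewrite exprSr expr_div_n exprMn; field; rewrite !expf_neq0 ?gt_eqF.
have : 1 <= (X / (c * Y)) ^+ s by rewrite exprn_ege1 // ler_pdivlMr ?mul1r ?mulr_gt0 // ltW.
have cY_ge0 : 0 <= c * Y by rewrite mulr_ge0 // ltW.
by move=> ge1; have := ler_peMr (ltW (le_lt_trans cY_ge0 cY_lt)) ge1; lra.
Qed.

End ProductBounds.

Section Composition.
Context {R : realType}.

Lemma sum_ratio_pow_le_loss_moment (K : finType) (a : R) (s : nat) (A B : K -> R) :
  0 < a -> (forall x, 0 <= A x) -> (forall x, 0 <= B x) ->
  \sum_x A x = \sum_x B x -> \sum_x B x <= 1 ->
  (forall x, A x <= expR a * B x) -> (forall x, B x <= expR a * A x) ->
  \sum_x A x ^+ s.+1 / B x ^+ s <= loss_moment a s.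
Proof.
move=> a_gt0 A_ge0 B_ge0 AB_eq B_le1 A_le B_le.
set al := expR (- a); set be := expR a.
have al_be : 0 < al < be by rewrite expR_gt0 ltr_expR; lra.
have albe1 : al * be = 1 by rewrite mulrC expRxMexpNx_1.
set c1 := (be * al ^+ s.+1 - al * be ^+ s.+1) / (be - al).
set c2 := (be ^+ s.+1 - al ^+ s.+1) / (be - al).
apply: le_trans (_ : \sum_x (c1 * B x + c2 * A x) <= _).
  apply: ler_sum => x _.
  have A_ge : al * B x <= A x.
    apply: le_trans (_ : al * (be * A x) <= _); first by rewrite ler_wpM2l ?expR_ge0.
    by rewrite mulrA albe1 mul1r.
  have -> : c1 * B x + c2 * A x = (be * al ^+ s.+1 * B x - al * be ^+ s.+1 * B x
      + (be ^+ s.+1 - al ^+ s.+1) * A x) / (be - al).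
    by rewrite /c1 /c2; field; rewrite subr_eq0 gt_eqF //; case/andP: al_be.
  by apply: ratio_expr_le_chord; rewrite ?A_ge ?A_le.
have c12E : c1 + c2 = loss_moment a s.
  have alE : al = be^-1 by rewrite /al /be expRN.
  have be_gt1 : 1 < be by rewrite -expR0 ltr_expR.
  rewrite /c1 /c2 /loss_moment -/al -/be alE !exprVn !exprS.
  have x_gt0 : 0 < be ^+ s by apply: exprn_gt0; lra.
  set x := be ^+ s; field.
  by rewrite !gt_eqF //; nra.
rewrite big_split /= -!mulr_sumr -AB_eq -mulrDl c12E.
by rewrite -[X in _ <= X]mulr1 ler_wpM2l ?loss_moment_ge0 // AB_eq.
Qed.

Section ProductFamily.
Context {K : finType} {r : nat}.
Implicit Types (P Q A B : 'I_r -> K -> R).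

Definition prodf (P : 'I_r -> K -> R) (t : {ffun 'I_r -> K}) := \prod_j P j (t j).

Lemma sum_prodf P : \sum_t prodf P t = \prod_j \sum_x P j x.
Proof. by rewrite bigA_distr_bigA. Qed.

Lemma sum_prodf_le_core P A d0 (S : pred {ffun 'I_r -> K}) :
  (forall j x, 0 <= A j x <= P j x) -> (forall j, \sum_x P j x = 1) ->
  (forall j, 1 - d0 <= \sum_x A j x) ->
  \sum_(t | S t) prodf P t <= \sum_(t | S t) prodf A t + r%:R * d0.
Proof.
move=> A_in P1 A_mass; rewrite -lerBlDl -sumrB.
apply: le_trans (_ : \sum_t (prodf P t - prodf A t) <= _).
  apply: ler_psum_predT => t; rewrite subr_ge0.
  by apply: ler_prod => j _; apply: A_in.
rewrite sumrB !sum_prodf big1 => [|j _]; last exact: P1.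
have mass_in j : 0 <= \sum_x A j x <= 1.
  apply/andP; split; first by apply: sumr_ge0 => x _; case/andP: (A_in j x).
  by rewrite -(P1 j); apply: ler_sum => x _; case/andP: (A_in j x).
have : 1 - \sum_j (1 - \sum_x A j x) <= \prod_j \sum_x A j x by apply: prod_ge_1_sub_sum.
have : \sum_(j < r) (1 - \sum_x A j x) <= r%:R * d0.
  rewrite (_ : r%:R * d0 = \sum_(j < r) d0); last by rewrite sumr_const card_ord mulr_natl.
  by apply: ler_sum => j _; have := A_mass j; lra.
lra.
Qed.

Lemma indist_prodf_pure A B a eps (s : nat) :
  0 < a -> (forall j x, 0 <= A j x) -> (forall j x, 0 <= B j x) ->
  (forall j, \sum_x A j x = \sum_x B j x) -> (forall j, \sum_x B j x <= 1) ->
  (forall j x, A j x <= expR a * B j x) -> (forall j x, B j x <= expR a * A j x) ->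
  indist (expR eps) (expR (- (s%:R * eps)) * loss_moment a s ^+ r) (prodf A) (prodf B).
Proof.
move=> a_gt0 A_ge0 B_ge0 AB_eq B_le1 A_le B_le S.
set c := expR eps; have c_gt0 : 0 < c := expR_gt0 eps.
have -> : expR (- (s%:R * eps)) = (c ^+ s)^-1 by rewrite expRN expRM_natl.
pose m j x := A j x ^+ s.+1 / B j x ^+ s.
have m_ge0 j x : 0 <= m j x by rewrite divr_ge0 ?exprn_ge0.
have pointwise t : prodf A t <= c * prodf B t + (c ^+ s)^-1 * prodf m t.
  have -> : prodf m t = prodf A t ^+ s.+1 / prodf B t ^+ s.
    by rewrite /prodf /m prodf_div !prodrXl.
  apply: le_add_ratio_moment => //; try by apply: prodr_ge0.
  move=> /eqP /prodf_eq0 [j _ /eqP Bj0]; apply/eqP/prodf_eq0; exists j => //.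
  by have := A_le j (t j); rewrite Bj0 mulr0 => A0; rewrite eq_le A0 A_ge0.
apply: le_trans (_ : \sum_(t | S t) (c * prodf B t + (c ^+ s)^-1 * prodf m t) <= _).
  by apply: ler_sum => t _; apply: pointwise.
rewrite big_split /= -!mulr_sumr lerD2l ler_wpM2l ?invr_ge0 ?exprn_ge0 ?(ltW c_gt0) //.
apply: le_trans (_ : \sum_t prodf m t <= _).
  by apply: ler_psum_predT => t; apply: prodr_ge0.
rewrite sum_prodf -[X in _ <= _ ^+ X]card_ord -prodr_const.
apply: ler_prod => j _; rewrite sumr_ge0 //=.
exact: sum_ratio_pow_le_loss_moment.
Qed.

Theorem indist_prodf P Q a eps d0 (s : nat) :
  0 < a -> (forall j x, 0 <= P j x) -> (forall j x, 0 <= Q j x) ->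
  (forall j, \sum_x P j x = 1) -> (forall j, \sum_x Q j x = 1) ->
  (forall j, indist (expR a) d0 (P j) (Q j)) -> (forall j, indist (expR a) d0 (Q j) (P j)) ->
  indist (expR eps) (r%:R * d0 + expR (- (s%:R * eps)) * loss_moment a s ^+ r)
    (prodf P) (prodf Q).
Proof.
move=> a_gt0 P_ge0 Q_ge0 P1 Q1 PQ QP S.
have ea_ge1 : 1 <= expR a by rewrite -expR0 ler_expR ltW.
have /boolp.choice [A /boolp.choice [B core]] := fun j =>
  indist_core _ (P j) (Q j) d0 ea_ge1 (P_ge0 j) (Q_ge0 j) (P1 j) (Q1 j) (PQ j) (QP j).
have A_in j x : 0 <= A j x <= P j x by case: (core j).
have B_in j x : 0 <= B j x <= Q j x by case: (core j).
have AB_eq j : \sum_x A j x = \sum_x B j x by case: (core j).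
have A_mass j : 1 - d0 <= \sum_x A j x by rewrite AB_eq; case: (core j).
have A_le j x : A j x <= expR a * B j x by case: (core j) => _ _ _ _ /(_ x) [].
have B_le j x : B j x <= expR a * A j x by case: (core j) => _ _ _ _ /(_ x) [].
have A_ge0 j x : 0 <= A j x by case/andP: (A_in j x).
have B_ge0 j x : 0 <= B j x by case/andP: (B_in j x).
have B_le1 j : \sum_x B j x <= 1.
  by rewrite -(Q1 j); apply: ler_sum => x _; case/andP: (B_in j x).
have B_le_Q : \sum_(t | S t) prodf B t <= \sum_(t | S t) prodf Q t.
  by apply: ler_sum => t _; apply: ler_prod => j _; apply: B_in.
have P_le_A : \sum_(t | S t) prodf P t <= \sum_(t | S t) prodf A t + r%:R * d0.
  exact: sum_prodf_le_core.
have A_le_B : \sum_(t | S t) prodf A t <=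
    expR eps * \sum_(t | S t) prodf B t + expR (- (s%:R * eps)) * loss_moment a s ^+ r.
  exact: indist_prodf_pure.
by have := ler_wpM2l (expR_ge0 eps) B_le_Q; lra.
Qed.

End ProductFamily.

End Composition.

Section Mixtures.
Context {R : realFieldType} {V : finType} {n : nat}.
Local Notation ffn := {ffun 'I_n -> V}.
Implicit Types (B : ffn) (k : 'I_n) (v : V).

Definition fupd B k v : ffn := [ffun i => if i == k then v else B i].

Lemma fupd_id B k : fupd B k (B k) = B.
Proof. by apply/ffunP => i; rewrite ffunE; case: eqP => // ->. Qed.

Lemma fupd_fupd B k v v' : fupd (fupd B k v) k v' = fupd B k v'.
Proof. by apply/ffunP => i; rewrite !ffunE; case: eqP. Qed.

Lemma fupd_eq B k v : fupd B k v k = v.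
Proof. by rewrite ffunE eqxx. Qed.

Lemma fupd_neq B k v i : i != k -> fupd B k v i = B i.
Proof. by rewrite ffunE => /negbTE ->. Qed.

(* [(B, v) |-> (fupd B k v, B k)] is an involution. *)
Lemma sum_fupd k (F : ffn -> V -> R) :
  \sum_(B : ffn) \sum_v F (fupd B k v) (B k) = \sum_(B : ffn) \sum_v F B v.
Proof.
rewrite !pair_bigA /=.
have swap_inv : involutive (fun p : ffn * V => (fupd p.1 k p.2, p.1 k)).
  by case=> B v /=; rewrite fupd_fupd fupd_id fupd_eq.
rewrite (reindex_inj (inv_inj swap_inv)) /=.
by apply: eq_bigr => -[B v] _ /=; rewrite fupd_fupd fupd_id fupd_eq.
Qed.

Lemma sum_resample_coord k (w w' : 'I_n -> V -> R) (G : ffn -> R) :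
  (forall i, \sum_v w i v = 1) -> (forall i, i != k -> w i =1 w' i) ->
  \sum_(B : ffn) \sum_v w' k v * \prod_i w i (B i) * G (fupd B k v) =
  \sum_(B : ffn) (\prod_i w' i (B i)) * G B.
Proof.
move=> w1 ww'; pose rest B := \prod_(i | i != k) w i (B i).
have wE B : \prod_i w i (B i) = w k (B k) * rest B by rewrite (bigD1 k).
have w'E B : \prod_i w' i (B i) = w' k (B k) * rest B.
  by rewrite (bigD1 k) //=; congr (_ * _); apply: eq_bigr => i /ww'.
have rest_fupd B v : rest (fupd B k v) = rest B by apply: eq_bigr => i /fupd_neq ->.
pose F B u := w' k (B k) * (w k u * rest B) * G B.
transitivity (\sum_(B : ffn) \sum_v F (fupd B k v) (B k)).
  by apply: eq_bigr => B _; apply: eq_bigr => v _; rewrite /F fupd_eq rest_fupd wE.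
rewrite sum_fupd; apply: eq_bigr => B _.
by rewrite /F -big_distrl -big_distrr -big_distrl /= w1 mul1r w'E.
Qed.

Lemma mixture_le_neighbour k (w w' : 'I_n -> V -> R) (G : ffn -> R) (c d : R) :
  (forall i v, 0 <= w i v) -> (forall i v, 0 <= w' i v) ->
  (forall i, \sum_v w i v = 1) -> (forall i, \sum_v w' i v = 1) ->
  (forall i, i != k -> w i =1 w' i) ->
  (forall B B' : ffn, (forall i, i != k -> B i = B' i) -> G B <= c * G B' + d) ->
  \sum_(B : ffn) (\prod_i w i (B i)) * G B <=
  c * \sum_(B : ffn) (\prod_i w' i (B i)) * G B + d.
Proof.
move=> w_ge0 w'_ge0 w1 w'1 ww' G_le.
have W1 : \sum_(B : ffn) \prod_i w i (B i) = 1.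
  by rewrite -bigA_distr_bigA big1 //= => i _; apply: w1.
have -> : \sum_(B : ffn) (\prod_i w i (B i)) * G B =
    \sum_(B : ffn) \sum_v w' k v * \prod_i w i (B i) * G B.
  by apply: eq_bigr => B _; rewrite -!big_distrl /= w'1 mul1r.
apply: le_trans (_ : \sum_(B : ffn) \sum_v
    w' k v * \prod_i w i (B i) * (c * G (fupd B k v) + d) <= _).
  apply: ler_sum => B _; apply: ler_sum => v _; apply: ler_wpM2l.
    by rewrite mulr_ge0 ?prodr_ge0.
  by apply: G_le => i /fupd_neq ->.
have split_sum (B : ffn) :
    \sum_v w' k v * \prod_i w i (B i) * (c * G (fupd B k v) + d) =
    c * \sum_v w' k v * \prod_i w i (B i) * G (fupd B k v) + d * \prod_i w i (B i).
  rewrite mulr_sumr -[X in _ + X]mul1r -(w'1 k) !big_distrl -big_split /=.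
  by apply: eq_bigr => v _; ring.
rewrite (eq_bigr _ (fun B _ => split_sum B)) big_split /= -!mulr_sumr W1 mulr1.
by rewrite sum_resample_coord.
Qed.

End Mixtures.

Lemma sum_prod_mixture {R : comPzSemiRingType} {V Y : finType} {n : nat}
    (w : 'I_n -> V -> R) (rho : V -> Y -> R) (P : pred {ffun 'I_n -> Y}) :
  \sum_(y | P y) \prod_i (\sum_v w i v * rho v (y i)) =
  \sum_(B : {ffun 'I_n -> V}) (\prod_i w i (B i)) * \sum_(y | P y) \prod_i rho (B i) (y i).
Proof.
under eq_bigr do rewrite bigA_distr_bigA.
under eq_bigr do under eq_bigr do rewrite big_split.
by rewrite exchange_big /=; apply: eq_bigr => B _; rewrite mulr_sumr.
Qed.

Section BitFlip.
Context {R : realFieldType}.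
Implicit Types (p q : R) (b y : bool).

Definition flipP p b y : R := (1 - p) * (b == y)%:R + p / 2.

Lemma flipP_ge0 p b y : 0 <= p <= 1 -> 0 <= flipP p b y.
Proof. by move=> /andP[p_ge0 p_le1]; rewrite /flipP; case: (b == y) => /=; lra. Qed.

Lemma flipP_sum p b : \sum_y flipP p b y = 1.
Proof. by rewrite big_bool /flipP; case: b => /=; lra. Qed.

Lemma flipP_comp p q b y :
  \sum_v flipP p b v * flipP q v y = flipP (1 - (1 - p) * (1 - q)) b y.
Proof. by rewrite big_bool /flipP; case: b; case: y => /=; field. Qed.

End BitFlip.

Section BitSum.
Context {R : realType}.
Implicit Types (lam ls : R).

Lemma randP_flipP n lam : randP n lam = flipP (lam / n%:R).
Proof. by []. Qed.

Lemma div_nat_itv n lam : 0 <= lam <= n%:R -> 0 <= lam / n%:R <= 1.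
Proof.
move=> /andP[lam_ge0 lam_le]; case: n lam_le => [|n] lam_le.
  by rewrite invr0 mulr0 lexx ler01.
by rewrite divr_ge0 // ler_pdivrMr ?ltr0Sn // mul1r.
Qed.

Lemma randP_ge0 n lam b y : 0 <= lam <= n%:R -> 0 <= randP n lam b y.
Proof. by move=> /div_nat_itv; apply: flipP_ge0. Qed.

Lemma randP_sum n lam b : \sum_y randP n lam b y = 1.
Proof. exact: flipP_sum. Qed.

(* Flipping with probability [lam / n] is flipping with probability [ls / n] after a
   preliminary flip with probability [(lam - ls) / (n - ls)]. *)
Definition extra_flip n ls lam := (lam - ls) / (n%:R - ls).

Lemma extra_flip_itv n ls lam : 0 <= ls -> ls <= lam <= n%:R -> 0 <= extra_flip n ls lam <= 1.
Proof.
move=> ls_ge0 /andP[ls_le lam_le]; rewrite /extra_flip.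
have [->|n_neq] := eqVneq (n%:R - ls) 0; first by rewrite invr0 mulr0 lexx ler01.
have n_gt : 0 < n%:R - ls by rewrite lt_def n_neq /=; lra.
by rewrite divr_ge0 ?ler_pdivrMr //=; lra.
Qed.

Lemma randP_extra_flip n ls lam b y : 0 <= ls -> ls <= lam <= n%:R ->
  \sum_v flipP (extra_flip n ls lam) b v * randP n ls v y = randP n lam b y.
Proof.
move=> ls_ge0 /andP[ls_le lam_le]; rewrite randP_flipP flipP_comp; congr flipP.
rewrite /extra_flip; have [n_ls|n_neq] := eqVneq (n%:R - ls) 0.
  have -> : lam = ls by lra.
  by rewrite n_ls invr0 mulr0 subr0 mul1r; ring.
have n_neq0 : n%:R != 0 :> R by apply: contraNneq n_neq => n0; apply/eqP; lra.
by field; apply/andP.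
Qed.

Lemma bitsum_prob_extra_flip {n ls lam} (X : 'I_n -> bool) T : 0 <= ls -> ls <= lam <= n%:R ->
  bitsum_prob n lam X T = \sum_(B : {ffun 'I_n -> bool})
    (\prod_i flipP (extra_flip n ls lam) (X i) (B i)) * bitsum_prob n ls B T.
Proof.
move=> ls_ge0 ls_lam; rewrite /bitsum_prob.
rewrite -(sum_prod_mixture (fun i => flipP (extra_flip n ls lam) (X i)) (randP n ls)).
by apply: eq_bigr => y _; apply: eq_bigr => i _; rewrite randP_extra_flip.
Qed.

Lemma bitsum_private_mono {n ls lam e d} : 0 <= ls -> ls <= lam <= n%:R ->
  bitsum_private n ls e d -> bitsum_private n lam e d.
Proof.
move=> ls_ge0 ls_lam priv X X' _ _ [k Xk] T.
rewrite (bitsum_prob_extra_flip X T ls_ge0 ls_lam) (bitsum_prob_extra_flip X' T ls_ge0 ls_lam).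
set p := extra_flip n ls lam.
have p_in : 0 <= p <= 1 by apply: extra_flip_itv.
apply: (mixture_le_neighbour k (fun i => flipP p (X i)) (fun i => flipP p (X' i))
  (fun B => bitsum_prob n ls B T)) => [i v|i v|i|i|i /Xk -> //|B B' BB'].
- exact: flipP_ge0 p_in.
- exact: flipP_ge0 p_in.
- exact: flipP_sum.
- exact: flipP_sum.
- by apply: priv => //; exists k.
Qed.

End BitSum.

Section RealSum.
Context {R : realType}.
Implicit Types (lam x : R).

Definition enc_bitP {r : nat} x (j : 'I_r) : R :=
  let mu : int := Num.ceil (x * r%:R) in
  if (j.+1)%:Z < mu then 1 else if (j.+1)%:Z == mu then x * r%:R - mu%:~R + 1 else 0.

Lemma encPE r x b : encP r x b = \prod_j (if b j then enc_bitP x j else 1 - enc_bitP x j).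
Proof. by []. Qed.

Lemma enc_bitP_itv {r : nat} x (j : 'I_r) : 0 <= enc_bitP x j <= 1.
Proof.
rewrite /enc_bitP; case: ifP => _; first by rewrite ler01 lexx.
case: ifP => _; last by rewrite lexx ler01.
have /andP[] := ceil_itv (x * r%:R); rewrite intrD; lra.
Qed.

Lemma encP_ge0 r x b : 0 <= encP r x b.
Proof.
rewrite encPE; apply: prodr_ge0 => j _.
by have /andP[? ?] := enc_bitP_itv x j; case: (b j); lra.
Qed.

Lemma encP_sum r x : \sum_b encP r x b = 1.
Proof.
under eq_bigr do rewrite encPE.
rewrite -(bigA_distr_bigA (fun j (v : bool) => if v then enc_bitP x j else 1 - enc_bitP x j)).
by rewrite big1 // => j _; rewrite big_bool /= addrC subrK.
Qed.

Lemma userP_r0 n lam x y : userP n 0 lam x y = 1.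
Proof.
rewrite /userP (eq_bigr (fun _ => 1)) => [|b _]; last by rewrite /encP !big_ord0 mulr1.
by rewrite sumr_const card_ffun card_ord expn0.
Qed.

Definition realsum_given n r lam (B : {ffun 'I_n -> {ffun 'I_r -> bool}}) (T : pred mset_out) :=
  \sum_(y : {ffun 'I_n -> {ffun 'I_r -> bool}} | T (realsum_view y))
     \prod_i \prod_j randP n lam (B i j) (y i j).

Lemma realsum_probE n r lam (X : 'I_n -> R) T :
  realsum_prob n r lam X T = \sum_(B : {ffun 'I_n -> {ffun 'I_r -> bool}})
     (\prod_i encP r (X i) (B i)) * realsum_given n r lam B T.
Proof.
exact: (sum_prod_mixture (fun i => encP r (X i))
   (fun b yi : {ffun 'I_r -> bool} => \prod_j randP n lam (b j) (yi j))).
Qed.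

End RealSum.

Section Columns.
Context {R : realType}.
Implicit Types (lam : R).

Definition ones {n : nat} (c : {ffun 'I_n -> bool}) : 'I_n.+1 := inord #|[set i | c i]|.

Lemma onesE {n : nat} (c : {ffun 'I_n -> bool}) : ones c = #|[set i | c i]| :> nat.
Proof. by rewrite /ones inordK // ltnS -[n in (_ <= n)%N]card_ord max_card. Qed.

Definition count_prob n lam (a : 'I_n -> bool) (t : 'I_n.+1) : R :=
  \sum_(c : {ffun 'I_n -> bool} | ones c == t) \prod_i randP n lam (a i) (c i).

Lemma count_prob_set n lam (a : 'I_n -> bool) (S : pred 'I_n.+1) :
  \sum_(t | S t) count_prob n lam a t = bitsum_prob n lam a (fun v => S (inord (v true))).
Proof.
rewrite /bitsum_prob (eq_bigl (fun y => S (ones y))); last first.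
  move=> y; rewrite /= ffunE /ones.
  by have -> : [set i | y i == true] = [set i | y i] by apply/setP => i; rewrite !inE; case: (y i).
rewrite (partition_big ones S) //=; apply: eq_bigr => t St; apply: eq_bigl => y.
by case: eqP => [->|]; rewrite ?St ?andbF.
Qed.

Lemma count_prob_ge0 n lam a t : 0 <= lam <= n%:R -> 0 <= count_prob n lam a t.
Proof.
by move=> lam_in; apply: sumr_ge0 => c _; apply: prodr_ge0 => i _; apply: randP_ge0.
Qed.

Lemma count_prob_sum n lam a : \sum_t count_prob n lam a t = 1.
Proof.
have := count_prob_set n lam a predT; rewrite /= => ->.
rewrite /bitsum_prob -(bigA_distr_bigA (fun i y => randP n lam (a i) y)) /=.
by rewrite big1 // => i _; apply: randP_sum.
Qed.

Lemma indist_count_prob n lam e d (a a' : 'I_n -> bool) :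
  bitsum_private n lam e d -> (exists k : 'I_n, forall i, i != k -> a i = a' i) ->
  indist (expR e) d (count_prob n lam a) (count_prob n lam a').
Proof. by move=> priv aa' S; rewrite !count_prob_set; apply: priv. Qed.

Definition col_counts {n r : nat} (y : {ffun 'I_n -> {ffun 'I_r -> bool}}) :
  {ffun 'I_r -> 'I_n.+1} := [ffun j => ones [ffun i => y i j]].

Definition counts_view {n r : nat} (t : {ffun 'I_r -> 'I_n.+1}) : mset_out :=
  [ffun m : bool => if m then (\sum_j t j)%N else (\sum_j (n - t j))%N].

Lemma realsum_view_counts {n r : nat} (y : {ffun 'I_n -> {ffun 'I_r -> bool}}) :
  realsum_view y = counts_view (col_counts y).
Proof.
have card_sum (I : finType) (P : pred I) : #|[set i | P i]| = (\sum_i P i)%N.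
  by rewrite -sum1_card big_mkcond /=; apply: eq_bigr => i _; rewrite inE; case: (P i).
apply/ffunP => m; rewrite !ffunE.
have -> : #|[set p : 'I_n * 'I_r | y p.1 p.2 == m]| = (\sum_j #|[set i | y i j == m]|)%N.
  rewrite card_sum -(pair_bigA _ (fun i j => (y i j == m : nat))) /= exchange_big /=.
  by apply: eq_bigr => j _; rewrite card_sum.
case: m; apply: eq_bigr => j _; rewrite ffunE onesE.
  suff -> : [set i | y i j == true] = [set i | [ffun i => y i j] i] by [].
  by apply/setP => i; rewrite !inE ffunE; case: (y i j).
have -> : [set i | y i j == false] = ~: [set i | [ffun i => y i j] i].
  by apply/setP => i; rewrite !inE ffunE; case: (y i j).
by rewrite -[n in (n - _)%N](card_ord n) -(cardsC [set i | [ffun i => y i j] i]) addKn.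
Qed.

Definition ffun_transpose {I J : finType} {T : Type} (y : {ffun I -> {ffun J -> T}}) :
  {ffun J -> {ffun I -> T}} := [ffun j => [ffun i => y i j]].

Lemma ffun_transposeK {I J : finType} {T : Type} :
  cancel (@ffun_transpose I J T) (@ffun_transpose J I T).
Proof. by move=> y; apply/ffunP => i; apply/ffunP => j; rewrite !ffunE. Qed.

Lemma prod_eq_nat {I : finType} {T : eqType} (a t : {ffun I -> T}) :
  \prod_j ((a j == t j)%:R : R) = (a == t)%:R.
Proof.
have [->|neq_at] := eqVneq a t; first by rewrite big1 // => j _; rewrite eqxx.
have [j neq_j] : exists j, a j != t j.
  apply/existsP; move: neq_at; apply: contraR; rewrite negb_exists => /forallP eq_at.
  by apply/eqP/ffunP => j; have := eq_at j; rewrite negbK => /eqP.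
by rewrite (bigD1 j) //= (negbTE neq_j) mul0r.
Qed.

Lemma realsum_given_cols n r lam (B : {ffun 'I_n -> {ffun 'I_r -> bool}}) T :
  realsum_given n r lam B T =
  \sum_(t | T (counts_view t)) prodf (fun j => count_prob n lam (fun i => B i j)) t.
Proof.
pose g (j : 'I_r) (c : {ffun 'I_n -> bool}) := \prod_i randP n lam (B i j) (c i).
have prodf_cols t : prodf (fun j => count_prob n lam (fun i => B i j)) t =
    \sum_(Y : {ffun 'I_r -> {ffun 'I_n -> bool}})
      ([ffun j => ones (Y j)] == t)%:R * \prod_j g j (Y j).
  rewrite /prodf (eq_bigr (fun j => \sum_c ((ones c == t j)%:R * g j c))); last first.
    move=> j _; rewrite /count_prob big_mkcond /=; apply: eq_bigr => c _.
    by case: (ones c == t j); rewrite ?mul1r ?mul0r.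
  rewrite bigA_distr_bigA /=; apply: eq_bigr => Y _.
  by rewrite big_split /= -prod_eq_nat; congr (_ * _); apply: eq_bigr => j _; rewrite ffunE.
rewrite (eq_bigr _ (fun t _ => prodf_cols t)) exchange_big /=.
rewrite (eq_bigr (fun Y : {ffun 'I_r -> {ffun 'I_n -> bool}} =>
    (T (counts_view [ffun j => ones (Y j)]))%:R * \prod_j g j (Y j))); last first.
  move=> Y _; rewrite -mulr_suml; congr (_ * _).
  rewrite big_mkcond (bigD1 [ffun j => ones (Y j)]) //= eqxx big1.
    by rewrite addr0; case: (T _).
  by move=> t /negbTE neq_t; rewrite eq_sym neq_t; case: (T _).
rewrite /realsum_given (reindex ffun_transpose) /=; last first.
  by apply: onW_bij; exists ffun_transpose; apply: ffun_transposeK.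
rewrite big_mkcond; apply: eq_bigr => Y _.
rewrite realsum_view_counts (_ : col_counts _ = [ffun j => ones (Y j)]); last first.
  by apply/ffunP => j; rewrite !ffunE; congr ones; apply/ffunP => i; rewrite !ffunE.
case: (T _); rewrite ?mul1r ?mul0r //.
by rewrite exchange_big /=; apply: eq_bigr => j _; apply: eq_bigr => i _; rewrite !ffunE.
Qed.

End Columns.

Section RealSumPrivacy.
Context {R : realType}.
Implicit Types (lam a eps delta : R).

Lemma dp_private_le {D : Type} {n : nat} (dom : D -> Prop) M eps delta delta' :
  delta <= delta' -> dp_private (n := n) dom M eps delta -> dp_private dom M eps delta'.
Proof.
move=> le_delta priv X X' X_in X'_in XX' T.
by apply: le_trans (priv X X' X_in X'_in XX' T) _; rewrite lerD2l.
Qed.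

Lemma realsum_private_r0 n lam eps delta : 0 <= eps -> 0 <= delta ->
  realsum_private n 0 lam eps delta.
Proof.
move=> eps_ge0 delta_ge0 X X' _ _ _ T.
set N := \sum_(y : {ffun 'I_n -> {ffun 'I_0 -> bool}} | T (realsum_view y)) (1 : R).
have probE (Y : 'I_n -> R) : realsum_prob n 0 lam Y T = N.
  by apply: eq_bigr => y _; apply: big1 => i _; apply: userP_r0.
have N_ge0 : 0 <= N by apply: sumr_ge0.
have : 1 <= expR eps by rewrite -expR0 ler_expR.
by rewrite !probE; nra.
Qed.

Lemma realsum_given_indist n r lam a eps (d0 : R) (s : nat) (k : 'I_n) T :
  0 < a -> 0 <= lam <= n%:R -> bitsum_private n lam a d0 ->
  forall B B' : {ffun 'I_n -> {ffun 'I_r -> bool}}, (forall i, i != k -> B i = B' i) ->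
  realsum_given n r lam B T <= expR eps * realsum_given n r lam B' T +
    (r%:R * d0 + expR (- (s%:R * eps)) * loss_moment a s ^+ r).
Proof.
move=> a_gt0 lam_in priv B B' BB'; rewrite !realsum_given_cols.
apply: indist_prodf => // [j t|j t|j|j|j|j]; rewrite ?count_prob_ge0 ?count_prob_sum //.
  by apply: indist_count_prob => //; exists k => i /BB' ->.
by apply: indist_count_prob => //; exists k => i /BB' ->.
Qed.

Lemma realsum_private_compose {n r lam a eps} {d0 : R} (s : nat) :
  0 < a -> 0 <= lam <= n%:R -> bitsum_private n lam a d0 ->
  realsum_private n r lam eps (r%:R * d0 + expR (- (s%:R * eps)) * loss_moment a s ^+ r).
Proof.
move=> a_gt0 lam_in priv X X' _ _ [k Xk] T; rewrite !realsum_probE.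
apply: (mixture_le_neighbour k (fun i => encP r (X i)) (fun i => encP r (X' i))
  (fun B => realsum_given n r lam B T)) => [i b|i b|i|i|i /Xk -> //|].
- exact: encP_ge0.
- exact: encP_ge0.
- exact: encP_sum.
- exact: encP_sum.
- exact: realsum_given_indist.
Qed.

End RealSumPrivacy.

Theorem theorem5p4 (R : realType) (eps delta : R) (n r : nat) (ls : R) :
  0 < eps < 1 -> 0 < delta < 1 ->
  is_lambda_star n (eps / Num.sqrt (8 * r%:R * ln (2 / delta))) (delta / (2 * r%:R)) ls ->
  forall lam : R, ls <= lam <= n%:R -> realsum_private n r lam eps delta.
Proof.
move=> eps_in delta_in [/andP[ls_ge0 _] priv_ls _] lam ls_lam.
have [eps_gt0 _] := andP eps_in; have [delta_gt0 delta_lt1] := andP delta_in.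
have [r0|r_gt0] := posnP r; first by rewrite r0; apply: realsum_private_r0; lra.
set L := ln (2 / delta); set s := Num.truncn (4 * L / eps).
have L_gt0 : 0 < L by rewrite ln_gt0 // ltr_pdivlMr //; lra.
have a_gt0 : 0 < eps / Num.sqrt (8 * r%:R * L).
  by rewrite divr_gt0 // sqrtr_gt0 !mulr_gt0 // ltr0n.
have lam_in : 0 <= lam <= n%:R by case/andP: ls_lam => *; apply/andP; split; lra.
have priv := bitsum_private_mono ls_ge0 ls_lam priv_ls.
apply: dp_private_le (realsum_private_compose s a_gt0 lam_in priv).
have s_bracket : 4 * L - eps < s%:R * eps <= 4 * L.
  by apply: truncn_mul_bracket => //; rewrite mulr_ge0 // ltW.
apply: le_trans _ (composition_budget eps_in delta_in r_gt0 s_bracket).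
rewrite lerD2l ler_wpM2l ?expR_ge0 // lerXn2r ?nnegrE ?loss_moment_ge0 ?expR_ge0 //.
exact: loss_moment_le.
Qed.
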